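(* Let $(X,\gamma)$ and $(Y,\nu)$ be probability spaces. Let $(E_i)_{i\ge1}$ be pairwise independent measurable subsets of $X$ and $(F_i)_{i\ge1}$ pairwise independent measurable subsets of $Y$ such that $\gamma(E_i)=\nu(F_i)$ for all $i$ and $\sum_{i=1}^\infty\gamma(E_i)=\infty$. Then for all measurable $E\subseteq X$, $F\subseteq Y$ and every $\varepsilon>0$ there exists a positive integer $i$ such that both $\gamma(E\cap E_i)>(\gamma(E)-\varepsilon)\gamma(E_i)$ and $\nu(F\cap F_i)>(\nu(F)-\varepsilon)\nu(F_i)$. *)

From HB Require Import structures.
From mathcomp Require Import all_boot all_order all_algebra.
From mathcomp Require Import all_classical all_reals all_analysis.
Set Implicit Arguments. Unset Strict Implicit. Unset Printing Implicit Defensive.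
Import Order.TTheory GRing.Theory Num.Theory.
Local Open Scope classical_set_scope.
Local Open Scope ereal_scope.

Definition pairwise_indep_pos {d} {T : measurableType d} {R : realType}
  (P : probability T R) (A : nat -> set T) : Prop :=
  forall i j : nat, (0 < i)%N -> (0 < j)%N -> i != j ->
    P (A i `&` A j) = P (A i) * P (A j).

From HB Require Import structures.
From mathcomp Require Import all_boot all_order all_algebra.
From mathcomp Require Import all_classical all_reals all_analysis.
From mathcomp Require Import lra.
Import Order.TTheory GRing.Theory Num.Theory.
Local Open Scope classical_set_scope.
Local Open Scope ring_scope.

(* Call [A] an [eps]-undershoot of [E] when P(E ∩ A) <= (P E - eps) P A.
   If every event of a pairwise independent finite family undershoots [E],
   then Cov(1_E, sum_i 1_{A_i}) <= -eps S with S = sum_i P(A_i), while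
   Var(1_E) <= 1 and, by pairwise independence, Var(sum_i 1_{A_i}) <= S.
   The Cauchy-Schwarz inequality, in the form Var(t 1_E + sum_i 1_{A_i}) >= 0
   at t = eps S, then gives eps^2 S <= 1.  Since sum_i P(E_i) diverges, some
   finite block of indices has mass above 2 / eps^2; the E-undershoots and the
   F-undershoots in it each have mass at most 1 / eps^2, so some index in the
   block is an undershoot for neither. *)

Lemma nneseries_unbounded {R : realType} {u : nat -> \bar R} {m : nat} :
  (forall n, (m <= n)%N -> (0 <= u n)%E) ->
  (\sum_(m <= i <oo) u i)%E = +oo%E ->
  forall M : R, exists N, (M%:E < \sum_(m <= i < N) u i)%E.
Proof.
move=> u_ge0 u_div M; apply/not_existsP => small.
have : (\sum_(m <= i <oo) u i <= M%:E)%E.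
  apply: lime_le; first exact: is_cvg_ereal_nneg_natsum.
  by apply: nearW => n; rewrite leNgt; apply/negP; apply: small.
by rewrite u_div leNgt ltry.
Qed.

Section indicator_moments.
Context {d} {T : measurableType d} {R : realType} (P : probability T R).
Local Open Scope ereal_scope.

Lemma variance_lincomb_ge0 (X Y : T -> R) (t : R) :
  X \in Lfun P 2%:E -> Y \in Lfun P 2%:E ->
  0 <= (t ^+ 2)%:E * 'V_P[X] + 'V_P[Y] + 2%:E * (t%:E * covariance P X Y).
Proof.
move=> X2 Y2; have Pfin : P setT \is a fin_num := fin_num_measure P _ measurableT.
have := variance_ge0 P (t \o* X \+ Y)%R.
rewrite varianceD ?varianceZ ?covarianceZl//.
- exact: Lfun_subset12.
- exact: Lfun_subset12.
- exact: Lfun2_mul_Lfun1.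
- by apply: Lfun_scale => //; rewrite ler1n.
Qed.

Lemma Lfun2_indic (A : set T) : measurable A -> (\1_A : T -> R) \in Lfun P 2%:E.
Proof.
move=> mA; rewrite inE/=; apply/andP; split; rewrite inE/=.
  exact: measurable_realfun.measurable_indic.
rewrite /finite_norm unlock poweR_lty//.
under eq_integral => x _.
  rewrite (_ : `|(EFin \o \1_A) x| `^ 2 = (\1_A x)%:E); last first.
    by rewrite /= /indic; case: (x \in A); rewrite /= ?normr0 ?normr1 ?poweR_EFin ?powR0 ?powR1.
  over.
by rewrite integral_indic// setIT ltey_eq fin_num_measure.
Qed.

Lemma Lfun2_sum (I : eqType) (s : seq I) (f : I -> T -> R) :
  {in s, forall i, f i \in Lfun P 2%:E} -> (\sum_(i <- s) f i)%R \in Lfun P 2%:E.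
Proof.
(* the additive closure of [Lfun P p] finds [1 <= p] in the context *)
have two_ge1 : (1 <= 2%:E :> \bar R) by rewrite lee1n.
by move=> f2; rewrite big_seq; apply: rpred_sum => i /f2.
Qed.

Lemma covariance_suml (I : eqType) (s : seq I) (f : I -> T -> R) (Y : T -> R) :
  {in s, forall i, f i \in Lfun P 2%:E} -> Y \in Lfun P 2%:E ->
  covariance P (\sum_(i <- s) f i)%R Y = \sum_(i <- s) covariance P (f i) Y.
Proof.
move=> + Y2; elim: s => [|i s IH] f2.
  by rewrite !big_nil; exact: (covariance_cst_l P 0 Y).
have f2s : {in s, forall j, f j \in Lfun P 2%:E}.
  by move=> j js; apply: f2; rewrite inE js orbT.
rewrite !big_cons -IH// covarianceDl//; first by apply: f2; rewrite mem_head.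
exact: Lfun2_sum.
Qed.

Definition pr (A : set T) : R := fine (P A).

Lemma prE A : measurable A -> P A = (pr A)%:E.
Proof. by move=> mA; rewrite /pr fineK// fin_num_measure. Qed.

Lemma pr_ge0 A : (0 <= pr A)%R.
Proof. by rewrite /pr fine_ge0. Qed.

Lemma pr_le1 A : measurable A -> (pr A <= 1)%R.
Proof. by move=> mA; rewrite -lee_fin -prE // probability_le1. Qed.

Lemma covariance_indic A B : measurable A -> measurable B ->
  covariance P (\1_A) (\1_B) = (pr (A `&` B) - pr A * pr B)%:E.
Proof.
move=> mA mB; have Pfin : P setT \is a fin_num := fin_num_measure P _ measurableT.
rewrite covarianceE; last 3 first.
- exact/(Lfun_subset12 Pfin)/Lfun2_indic.
- exact/(Lfun_subset12 Pfin)/Lfun2_indic.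
- by apply: Lfun2_mul_Lfun1; apply: Lfun2_indic.
have -> : (\1_A * \1_B)%R = \1_(A `&` B) :> (T -> R) by rewrite indicI.
by rewrite !expectation_indic ?prE//; exact: measurableI.
Qed.

Lemma variance_indic A : measurable A -> 'V_P[\1_A] = (pr A * (1 - pr A))%:E.
Proof. by move=> mA; rewrite /variance covariance_indic// setIid mulrBr mulr1. Qed.

Definition undershoots (E A : set T) (eps : R) : bool :=
  (pr (E `&` A) <= (pr E - eps) * pr A)%R.

Lemma undershootsN E A eps : measurable E -> measurable A ->
  ~~ undershoots E A eps = ((P E - eps%:E) * P A < P (E `&` A)).
Proof.
move=> mE mA; have mEA := measurableI _ _ mE mA.
by rewrite !prE// -EFinB -EFinM lte_fin ltNge.
Qed.

Lemma sum_prE (A : nat -> set T) m n : (forall i, (m <= i)%N -> measurable (A i)) ->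
  \sum_(m <= i < n) P (A i) = (\sum_(m <= i < n) pr (A i))%:E.
Proof.
move=> mA; rewrite -sumEFin big_nat_cond [RHS]big_nat_cond.
by apply: eq_bigr => i /andP[/andP[mi _] _]; apply/prE/mA.
Qed.

Section pairwise_independent_family.
Variables (A : nat -> set T) (s : seq nat).
Hypothesis mA : {in s, forall i, measurable (A i)}.
Hypothesis s_uniq : uniq s.
Hypothesis A_indep : {in s &, forall i j, i != j ->
  P (A i `&` A j) = P (A i) * P (A j)}.

Let count_A : T -> R := (\sum_(i <- s) \1_(A i))%R.

Let count_A_Lfun2 : count_A \in Lfun P 2%:E.
Proof. by apply: Lfun2_sum => i /mA/Lfun2_indic. Qed.

Lemma covariance_indic_sum E : measurable E ->
  covariance P (\1_E) count_A = (\sum_(i <- s) (pr (E `&` A i) - pr E * pr (A i)))%:E.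
Proof.
move=> mE; rewrite covarianceC covariance_suml; last 2 first.
- by move=> i /mA/Lfun2_indic.
- exact: Lfun2_indic.
rewrite -sumEFin big_seq [RHS]big_seq; apply: eq_bigr => i /mA mAi.
by rewrite covariance_indic// setIC mulrC.
Qed.

(* Pairwise independence kills every off-diagonal covariance. *)
Lemma variance_indic_sum :
  'V_P[count_A] = (\sum_(i <- s) pr (A i) * (1 - pr (A i)))%:E.
Proof.
rewrite /variance {1}/count_A covariance_suml//; last by move=> i /mA/Lfun2_indic.
rewrite -sumEFin big_seq [RHS]big_seq; apply: eq_bigr => i si.
rewrite covariance_indic_sum; last exact: mA.
congr EFin; rewrite (bigD1_seq i)//= setIid.
rewrite big_seq_cond big1 ?addr0 ?mulrBr ?mulr1// => j /andP[sj ji].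
have [mAi mAj] := (mA _ si, mA _ sj).
by rewrite /pr A_indep 1?eq_sym// fineM ?subrr// fin_num_measure.
Qed.

Lemma undershoot_mass_le E eps : measurable E -> (0 < eps)%R ->
  {in s, forall i, undershoots E (A i) eps} ->
  (eps ^+ 2 * \sum_(i <- s) pr (A i) <= 1)%R.
Proof.
move=> mE eps_gt0 under; set S := (\sum_(i <- s) pr (A i))%R.
have S_ge0 : (0 <= S)%R by apply: sumr_ge0 => i _; exact: pr_ge0.
have varE_le1 : (pr E * (1 - pr E) <= 1)%R.
  by have := pr_ge0 E; have := pr_le1 E mE; nra.
have var_le : (\sum_(i <- s) pr (A i) * (1 - pr (A i)) <= S)%R.
  rewrite /S big_seq [leRHS]big_seq; apply: ler_sum => i /mA mAi.
  by have := pr_ge0 (A i); have := pr_le1 (A i) mAi; nra.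
have cov_le : (\sum_(i <- s) (pr (E `&` A i) - pr E * pr (A i)) <= - eps * S)%R.
  rewrite /S mulr_sumr big_seq [leRHS]big_seq; apply: ler_sum => i si.
  by have := under i si; rewrite /undershoots; lra.
have := @variance_lincomb_ge0 _ _ (eps * S) (Lfun2_indic E mE) count_A_Lfun2.
rewrite variance_indic// variance_indic_sum covariance_indic_sum//.
rewrite -!EFinM -!EFinD lee_fin; move: varE_le1 var_le cov_le.
set v := (pr E * _)%R; set w := (\sum_(i <- s) _)%R; set c := (\sum_(i <- s) _)%R.
move=> v_le1 w_le c_le quad.
have epsS_ge0 : (0 <= eps * S)%R by rewrite mulr_ge0 // ltW.
have : ((eps * S) ^+ 2 * v <= (eps * S) ^+ 2)%R by rewrite ler_piMr // sqr_ge0.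
have : (eps * S * c <= eps * S * (- eps * S))%R by rewrite ler_wpM2l.
nra.
Qed.

End pairwise_independent_family.

Lemma undershoot_mass_le_iota N {A : nat -> set T} {E eps} :
  (forall i, (0 < i)%N -> measurable (A i)) -> pairwise_indep_pos P A ->
  measurable E -> (0 < eps)%R ->
  (eps ^+ 2 * \sum_(1 <= i < N | undershoots E (A i) eps) pr (A i) <= 1)%R.
Proof.
move=> mA A_indep mE eps_gt0; rewrite -big_filter.
have pos i : i \in [seq i <- index_iota 1 N | undershoots E (A i) eps] -> (0 < i)%N.
  by rewrite mem_filter mem_index_iota => /and3P[].
apply: undershoot_mass_le => //.
- by move=> i /pos/mA.
- exact/filter_uniq/iota_uniq.
- by move=> i j /pos i_gt0 /pos j_gt0; apply: A_indep.
- exact: mE.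
- by move=> i; rewrite mem_filter => /andP[].
Qed.
End indicator_moments.

Theorem mainTheorem12 (R : realType)
  (dX : measure_display) (X : measurableType dX) (gamma : probability X R)
  (dY : measure_display) (Y : measurableType dY) (nu : probability Y R)
  (E_ : nat -> set X) (F_ : nat -> set Y)
  (mE : forall i, (0 < i)%N -> measurable (E_ i))
  (mF : forall i, (0 < i)%N -> measurable (F_ i))
  (iE : pairwise_indep_pos gamma E_)
  (iF : pairwise_indep_pos nu F_)
  (eqEF : forall i, (0 < i)%N -> gamma (E_ i) = nu (F_ i))
  (div : (\sum_(1 <= i <oo) gamma (E_ i))%E = +oo%E) :
  forall (E : set X) (F : set Y), measurable E -> measurable F ->
  forall eps : R, 0 < eps ->
  exists i : nat, (0 < i)%N /\
    ((gamma E - eps%:E) * gamma (E_ i) < gamma (E `&` E_ i))%E /\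
    ((nu F - eps%:E) * nu (F_ i) < nu (F `&` F_ i))%E.
Proof.
move=> E F mEE mFF eps eps_gt0.
have [N] := nneseries_unbounded (fun i _ => measure_ge0 gamma (E_ i)) div (2 / eps ^+ 2).
rewrite (sum_prE _ _ _ _ mE) lte_fin ltr_pdivrMr ?exprn_gt0// => mass_gt.
apply/not_existsP => no_good_index.
pose uE i := undershoots gamma E (E_ i) eps.
pose uF i := undershoots nu F (F_ i) eps.
have mass_split : \sum_(1 <= i < N) pr gamma (E_ i) <=
    \sum_(1 <= i < N | uE i) pr gamma (E_ i) + \sum_(1 <= i < N | uF i) pr nu (F_ i).
  rewrite (bigID uE) /= lerD2l big_mkcond [leRHS]big_mkcond.
  apply: ler_sum_nat => i /andP[i_gt0 _] /=.
  have [_|nuE] /= := boolP (uE i).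
    by case: ifP => _; rewrite ?pr_ge0.
  have -> : uF i.
    apply/negPn/negP => nuF; apply: (no_good_index i).
    have [mEi mFi] := (mE i i_gt0, mF i i_gt0).
    by rewrite -!undershootsN.
  by rewrite /pr eqEF.
have := undershoot_mass_le_iota gamma N mE iE mEE eps_gt0.
have := undershoot_mass_le_iota nu N mF iF mFF eps_gt0.
rewrite -/uE -/uF; nra.
Qed.
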